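(* For every fixed $m\ge4$ and $k\ge3$ (with $k<m$) there exists $\vec p\in(0,1)^m$ such that for every sufficiently large $n$, $$\Pr_{P\sim(\pi_{\vec p})^n}\big(|(\mathrm{JR}\subseteq_?\mathrm{CORE})(P)|=0\big)=1-\exp(-\Omega(n))\quad\text{and}\quad\Pr_{P\sim(\pi_{\vec p})^n}\big(|(\mathrm{JR}=_?\mathrm{CORE})(P)|=0\big)=1-\exp(-\Omega(n)).$$
   Context: $\mathcal A=[m]$, $\mathcal A_k$ the $k$-subsets. Approval profile $P=(A_1,\dots,A_n)$, ballots i.i.d. from $\pi_{\vec p}$ with $\Pr(A)=\prod_{i\in A}p_i\prod_{i\notin A}(1-p_i)$. $\mathrm{JR}(P)$ is the set of $W\in\mathcal A_k$ such that for every set of voters $N'\subseteq[n]$ with $|N'|\ge n/k$ and $\bigcap_{j\in N'}A_j\ne\emptyset$ there is $j\in N'$ with $A_j\cap W\ne\emptyset$. $\mathrm{CORE}(P)$ is the set of $W\in\mathcal A_k$ such that for every nonempty $N'\subseteq[n]$ and $W'\subseteq\mathcal A$ with $|W'|/k\le|N'|/n$ some $j\in N'$ has $|A_j\cap W'|\le|A_j\cap W|$. For set-valued mappings: $(f_1\subseteq_?f_2)(P)=f_1(P)$ if $f_1(P)\subseteq f_2(P)$ and $\emptyset$ otherwise; $(f_1=_?f_2)(P)=f_1(P)$ if $f_1(P)=f_2(P)$ and $\emptyset$ otherwise. *)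

From HB Require Import structures.
From mathcomp Require Import all_boot all_order all_algebra.
From mathcomp Require Import reals sequences exp.
Set Implicit Arguments. Unset Strict Implicit. Unset Printing Implicit Defensive.
Import Order.TTheory GRing.Theory Num.Theory.
Local Open Scope ring_scope.

(* Alternatives are 'I_m; a ballot is a subset of alternatives. *)
Definition profile (m n : nat) := {ffun 'I_n -> {set 'I_m}}.

Definition ballot_prob {R : realType} {m : nat} (p : 'I_m -> R)
  (A : {set 'I_m}) : R :=
  (\prod_(i in A) p i) * \prod_(i in ~: A) (1 - p i).

Definition profile_prob {R : realType} {m n : nat} (p : 'I_m -> R)
  (P : profile m n) : R :=
  \prod_(j < n) ballot_prob p (P j).

Definition prob {R : realType} {m : nat} (n : nat) (p : 'I_m -> R)
  (E : pred (profile m n)) : R :=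
  \sum_(P : profile m n | E P) profile_prob p P.

(* JR(P): W in A_k such that every N' with |N'| >= n/k and nonempty common
   approval contains a voter j with A_j meeting W. (|N'| >= n/k <-> |N'|*k >= n) *)
Definition JR {m n : nat} (k : nat) (P : profile m n) : {set {set 'I_m}} :=
  [set W : {set 'I_m} | (#|W| == k) &&
    [forall N' : {set 'I_n},
       ((n <= #|N'| * k)%N && (\bigcap_(j in N') P j != set0)) ==>
       [exists j in N', P j :&: W != set0]]].

(* CORE(P): W in A_k such that for every nonempty N' and W' with
   |W'|/k <= |N'|/n (i.e. |W'|*n <= |N'|*k) some j in N' has
   |A_j cap W'| <= |A_j cap W|. *)
Definition CORE {m n : nat} (k : nat) (P : profile m n) : {set {set 'I_m}} :=
  [set W : {set 'I_m} | (#|W| == k) &&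
    [forall N' : {set 'I_n}, forall W' : {set 'I_m},
       ((N' != set0) && (#|W'| * n <= #|N'| * k)%N) ==>
       [exists j in N', (#|P j :&: W'| <= #|P j :&: W|)%N]]].

Definition subset_q {m n : nat} (f1 f2 : profile m n -> {set {set 'I_m}})
  (P : profile m n) : {set {set 'I_m}} :=
  if f1 P \subset f2 P then f1 P else set0.

Definition eq_q {m n : nat} (f1 f2 : profile m n -> {set {set 'I_m}})
  (P : profile m n) : {set {set 'I_m}} :=
  if f1 P == f2 P then f1 P else set0.

Arguments prob {R m} n p E.

From HB Require Import structures.
From mathcomp Require Import all_boot all_order all_algebra.
From mathcomp Require Import reals sequences exp.
From mathcomp Require Import lra zify.

Set Implicit Arguments.
Unset Strict Implicit.
Unset Printing Implicit Defensive.
Import Order.TTheory GRing.Theory Num.Theory.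
Local Open Scope ring_scope.

(* Let all alternatives but a and b have approval probability d := 1/(m 4^k),
   and a, b approval probability 1 - d.  A ballot then differs from {a, b}
   with probability at most m d = 4^-k, so Markov's inequality for
   4^(k #deviators) shows that with probability at least 1 - 2^-n fewer than
   n/k voters deviate from {a, b}.  On that event any committee W of size k
   with a in W and b notin W is in JR (every group of size n/k contains a
   {a, b}-voter, who approves a) but not in the core: the more than 2n/k
   voters with ballot {a, b} can afford the committee {a, b}, and each of them
   strictly gains. *)

Lemma sum_profile_prod (R : comPzSemiRingType) (m n : nat)
    (f : {set 'I_m} -> R) :
  \sum_(P : profile m n) \prod_(j < n) f (P j) = (\sum_A f A) ^+ n.
Proof.
rewrite -(bigA_distr_bigA (fun (j : 'I_n) A => f A)) /=.
by rewrite prodr_const card_ord.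
Qed.

Lemma exists_set_with_without (T : finType) (a b : T) (k : nat) :
  a != b -> (0 < k < #|T|)%N ->
  exists W : {set T}, [/\ #|W| = k, a \in W & b \notin W].
Proof.
move=> ab /andP[k_gt0 k_lt].
have cardC : #|~: [set a; b]| = (#|T| - 2)%N.
  by rewrite -(cardsC [set a; b]) cards2 ab addKn.
have : (0 < #|[set X : {set T} | X \subset ~: [set a; b] & #|X| == k.-1]|)%N.
  by rewrite cards_draws bin_gt0 cardC; lia.
case/card_gt0P => X; rewrite inE => /andP[/subsetP XC /eqP Xk].
have notinX x : x \in [set a; b] -> x \notin X.
  by move=> xab; apply/negP => /XC; rewrite inE xab.
exists (a |: X); split.
- by rewrite cardsU1 notinX ?set21 // Xk add1n prednK.
- exact: setU11.
- by rewrite !inE eq_sym (negbTE ab) notinX ?set22.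
Qed.

Definition deviators {m n : nat} (S : {set 'I_m}) (P : profile m n) :
  {set 'I_n} := [set j | P j != S].

Section BallotDistribution.

Variables (R : realType) (m : nat) (p : 'I_m -> R).

Lemma sum_ballot_prob : \sum_(A : {set 'I_m}) ballot_prob p A = 1.
Proof.
have := @bigA_distr R 0 1 *%R +%R _ p (fun i => 1 - p i).
rewrite (eq_bigr (fun _ => 1)); last by move=> i _; rewrite /= addrC subrK.
rewrite big1_eq => ->; apply: eq_bigr => A _.
rewrite /ballot_prob [RHS](bigID (mem A)) /=; congr (_ * _).
  by apply: eq_bigr => i ->.
by apply: eq_big => [i|i]; rewrite ?in_setC // => /negbTE ->.
Qed.

Lemma sum_profile_prob n : \sum_(P : profile m n) profile_prob p P = 1.
Proof. by rewrite /profile_prob sum_profile_prod sum_ballot_prob expr1n. Qed.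

Lemma prob_predC n (E : pred (profile m n)) :
  prob n p E = 1 - prob n p (predC E).
Proof. by rewrite /prob -(sum_profile_prob n) [\sum_P _](bigID E) /= addrK. Qed.

Lemma sum_profile_prob_deviators n S (x : R) :
  \sum_(P : profile m n) profile_prob p P * x ^+ #|deviators S P| =
  (ballot_prob p S + x * (1 - ballot_prob p S)) ^+ n.
Proof.
pose g A := ballot_prob p A * (if A != S then x else 1).
have rest : \sum_(A | A != S) ballot_prob p A = 1 - ballot_prob p S.
  rewrite -sum_ballot_prob [in RHS](bigD1 S) //=.
  by rewrite (addrC (ballot_prob p S)) addrK.
have <- : \sum_A g A = ballot_prob p S + x * (1 - ballot_prob p S).
  rewrite (bigD1 S) //= /g eqxx mulr1 -rest mulr_sumr; congr (_ + _).
  by apply: eq_bigr => A ->; rewrite mulrC.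
rewrite -sum_profile_prod; apply: eq_bigr => P _.
rewrite /g [RHS]big_split /=; congr (_ * _).
by rewrite -prodr_const big_mkcond; apply: eq_bigr => j _; rewrite inE.
Qed.

Hypothesis p01 : forall i, 0 <= p i <= 1.

Lemma ballot_prob_ge0 A : 0 <= ballot_prob p A.
Proof. by apply: mulr_ge0; apply: prodr_ge0 => i _; have := p01 i; lra. Qed.

Lemma ballot_prob_le1 A : ballot_prob p A <= 1.
Proof.
rewrite -sum_ballot_prob (bigD1 A) //= lerDl.
by apply: sumr_ge0 => B _; exact: ballot_prob_ge0.
Qed.

Lemma profile_prob_ge0 n (P : profile m n) : 0 <= profile_prob p P.
Proof. by apply: prodr_ge0 => j _; exact: ballot_prob_ge0. Qed.

Lemma le_prob n (E F : pred (profile m n)) :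
  subpred E F -> prob n p E <= prob n p F.
Proof.
move=> EF; rewrite /prob [leRHS]big_mkcond [leLHS]big_mkcond /=.
apply: ler_sum => P _; case: ifP => [/EF -> //| _].
by case: ifP => _ //; exact: profile_prob_ge0.
Qed.

(* Markov's inequality applied to t ^+ (k * #|deviators S P|). *)
Lemma prob_many_deviators n k S (t : R) : 1 <= t ->
  prob n p (fun P => n <= #|deviators S P| * k)%N <=
  ((ballot_prob p S + t ^+ k * (1 - ballot_prob p S)) / t) ^+ n.
Proof.
move=> t_ge1; have t_gt0 : 0 < t by lra.
rewrite expr_div_n ler_pdivlMr ?exprn_gt0 // -sum_profile_prob_deviators.
rewrite /prob mulr_suml.
rewrite [leRHS](bigID (fun P => n <= #|deviators S P| * k)%N) /=.
rewrite -[leLHS]addr0; apply: lerD.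
  apply: ler_sum => P dev; apply: ler_wpM2l; first exact: profile_prob_ge0.
  by rewrite -exprM; apply: ler_weXn2l; rewrite // mulnC.
apply: sumr_ge0 => P _; apply: mulr_ge0; first exact: profile_prob_ge0.
by rewrite exprn_ge0 // exprn_ge0 // ltW.
Qed.

Lemma prob_few_deviators n k S :
  4 ^+ k * (1 - ballot_prob p S) <= 1 ->
  1 - 2^-1 ^+ n <= prob n p (fun P => #|deviators S P| * k < n)%N.
Proof.
move=> gap; rewrite prob_predC lerD2l lerN2.
apply: le_trans (le_prob (F := fun P => n <= #|deviators S P| * k)%N _) _.
  by move=> P /=; rewrite -leqNgt.
have one_le4 : (1 : R) <= 4 by lra.
apply: le_trans (prob_many_deviators n k S one_le4) _.
have [ge0 le1] := (ballot_prob_ge0 S, ballot_prob_le1 S).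
apply: lerXn2r; rewrite ?nnegrE ?invr_ge0 //.
  by rewrite divr_ge0 // addr_ge0 // mulr_ge0 ?exprn_ge0 // subr_ge0.
by rewrite ler_pdivrMr //; lra.
Qed.

End BallotDistribution.

Section CommitteeProperties.

Variables (m n k : nat) (P : profile m n).

Lemma in_JR_few_deviators (S W : {set 'I_m}) :
  #|W| = k -> S :&: W != set0 -> (#|deviators S P| * k < n)%N ->
  W \in JR k P.
Proof.
move=> Wk SW few; rewrite inE Wk eqxx /=.
apply/forallP => N; apply/implyP => /andP[large _].
apply: contraTT large => /exists_inPn disjointN.
rewrite -ltnNge; apply: leq_ltn_trans few.
rewrite leq_mul2r subset_leq_card ?orbT //.
apply/subsetP => j jN; rewrite inE; apply/eqP => PjS.
by move: (disjointN j jN); rewrite PjS SW.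
Qed.

Lemma notin_CORE_conformers (S W : {set 'I_m}) :
  (0 < n)%N -> (#|S :&: W| < #|S|)%N ->
  (#|S| * n <= #|~: deviators S P| * k)%N -> W \notin CORE k P.
Proof.
move=> n_gt0 gain afford; rewrite inE.
apply/negP => /andP[_ /forallP /(_ (~: deviators S P)) /forallP /(_ S)].
have -> : ~: deviators S P != set0.
  apply: contraTneq afford => ->; rewrite cards0 mul0n -ltnNge.
  by rewrite muln_gt0 n_gt0 andbT (leq_ltn_trans _ gain).
rewrite afford /= => /exists_inP [j].
by rewrite !inE negbK => /eqP ->; rewrite setIid leqNgt gain.
Qed.

Lemma JR_notin_CORE_pair (a b : 'I_m) (W : {set 'I_m}) :
  (3 <= k)%N -> a != b -> a \in W -> b \notin W -> #|W| = k ->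
  (#|deviators [set a; b] P| * k < n)%N -> W \in JR k P /\ W \notin CORE k P.
Proof.
move=> k_ge3 ab aW bW Wk few; split.
  apply: (in_JR_few_deviators Wk _ few).
  by apply/set0Pn; exists a; rewrite !inE eqxx aW.
apply: (notin_CORE_conformers (S := [set a; b])).
- exact: leq_ltn_trans few.
- apply: proper_card; apply/properP; split; first exact: subsetIl.
  by exists b; rewrite !inE ?eqxx ?orbT // (negbTE bW) andbF.
- have conformers :
      #|~: deviators [set a; b] P| = (n - #|deviators [set a; b] P|)%N.
    by rewrite cardsCs setCK card_ord.
  have k3n : (3 * n <= k * n)%N by rewrite leq_mul2r k_ge3 orbT.
  by rewrite cards2 ab conformers mulnBl; nia.
Qed.

End CommitteeProperties.

Lemma subset_q_set0 m n (f1 f2 : profile m n -> {set {set 'I_m}}) P W :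
  W \in f1 P -> W \notin f2 P -> subset_q f1 f2 P = set0.
Proof.
by move=> W1 W2; rewrite /subset_q ifN //; apply: contra W2 => /subsetP; apply.
Qed.

Lemma eq_q_set0 m n (f1 f2 : profile m n -> {set {set 'I_m}}) P W :
  W \in f1 P -> W \notin f2 P -> eq_q f1 f2 P = set0.
Proof. by move=> W1 W2; rewrite /eq_q ifN //; apply: contra W2 => /eqP <-. Qed.

Lemma onemX_ge (R : realDomainType) (d : R) (n : nat) :
  d <= 1 -> 1 - n%:R * d <= (1 - d) ^+ n.
Proof.
move=> d_le1; elim: n => [|n IH]; first by rewrite mul0r subr0 expr0.
have sq : 0 <= n%:R * (d * d) by rewrite mulr_ge0 // -expr2 sqr_ge0.
rewrite exprS -natr1 mulrDl mul1r.
apply: le_trans (ler_wpM2l _ IH); rewrite ?subr_ge0 //.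
by rewrite mulrBr mulr1 -[X in _ <= _ - X]mulrCA; lra.
Qed.

Lemma onemX_le_expR (R : realType) (x : R) (n : nat) :
  x <= 1 -> (1 - x) ^+ n <= expR (- (x * n%:R)).
Proof.
move=> x_le1; rewrite -mulNr expRM_natr.
by apply: lerXn2r; rewrite ?nnegrE ?subr_ge0 ?expR_ge0 //; exact: expR_ge1Dx.
Qed.

Definition concentrated_at {R : realType} {m : nat} (S : {set 'I_m}) (d : R) :
  'I_m -> R := fun i => if i \in S then 1 - d else d.

Lemma ballot_prob_concentrated_at (R : realType) m (S : {set 'I_m}) (d : R) :
  ballot_prob (concentrated_at S d) S = (1 - d) ^+ m.
Proof.
have inS i : i \in S -> concentrated_at S d i = 1 - d.
  by rewrite /concentrated_at => ->.
have notinS i : i \in ~: S -> 1 - concentrated_at S d i = 1 - d.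
  by rewrite inE /concentrated_at => /negbTE ->.
rewrite /ballot_prob (eq_bigr _ inS) (eq_bigr _ notinS) !prodr_const.
by rewrite -exprD cardsC card_ord.
Qed.

Lemma concentrated_at_in01 (R : realType) m (S : {set 'I_m}) (d : R) i :
  0 < d < 1 -> 0 < concentrated_at S d i < 1.
Proof. by rewrite /concentrated_at; case: ifP => _; lra. Qed.

Lemma onem_ballot_prob_concentrated_at (R : realType) m (S : {set 'I_m})
    (d : R) :
  d <= 1 -> 1 - ballot_prob (concentrated_at S d) S <= m%:R * d.
Proof.
move=> d_le1; rewrite ballot_prob_concentrated_at lerBlDr addrC -lerBlDr.
exact: onemX_ge.
Qed.

Theorem proposition2 (R : realType) (m k : nat) :
  (4 <= m)%N -> (3 <= k)%N -> (k < m)%N ->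
  exists p : 'I_m -> R, (forall i, 0 < p i < 1) /\
  exists c : R, 0 < c /\ exists N : nat, forall n : nat, (N <= n)%N ->
    1 - expR (- (c * n%:R)) <=
      prob n p (fun P => #|subset_q (@JR m n k) (@CORE m n k) P| == 0%N) /\
    1 - expR (- (c * n%:R)) <=
      prob n p (fun P => #|eq_q (@JR m n k) (@CORE m n k) P| == 0%N).
Proof.
(* The hypothesis 4 <= m is implied by 3 <= k < m. *)
move=> _ k_ge3 k_lt_m.
have m_gt1 : (1 < m)%N by lia.
pose a : 'I_m := Ordinal (ltnW m_gt1); pose b : 'I_m := Ordinal m_gt1.
have ab : a != b by [].
have k_range : (0 < k < #|'I_m|)%N by rewrite card_ord; lia.
have [W [Wk aW bW]] := exists_set_with_without ab k_range.
have m4k_gt1 : 1 < m%:R * 4 ^+ k :> R.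
  have pow4_ge1 : 1 <= 4 ^+ k :> R by rewrite exprn_ege1 // ler1n.
  by apply: lt_le_trans (ler_peMr (ler0n _ m) pow4_ge1); rewrite ltr1n.
pose d : R := (m%:R * 4 ^+ k)^-1.
have md : m%:R * d * 4 ^+ k = 1.
  by rewrite /d mulrAC mulfV ?gt_eqF ?(lt_trans ltr01).
have d01 : 0 < d < 1 by rewrite invr_gt0 invf_lt1 (lt_trans ltr01).
pose p := concentrated_at [set a; b] d.
exists p; split=> [i|]; first exact: concentrated_at_in01.
exists 2^-1; split; first by rewrite invr_gt0.
exists 0%N => n _.
have p01 i : 0 <= p i <= 1.
  by case/andP: (concentrated_at_in01 [set a; b] i d01) => /ltW -> /ltW ->.
have gap : 4 ^+ k * (1 - ballot_prob p [set a; b]) <= 1.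
  rewrite -[leRHS]md mulrC ler_pM2r ?exprn_gt0 //.
  by apply: onem_ballot_prob_concentrated_at; case/andP: d01 => _ /ltW.
have few := prob_few_deviators p01 n gap.
have decay : 1 - expR (- (2^-1 * n%:R)) <= 1 - 2^-1 ^+ n :> R.
  rewrite lerD2l lerN2 -[in leLHS](_ : 1 - 2^-1 = 2^-1 :> R); last by lra.
  by rewrite onemX_le_expR //; lra.
have sep P : (#|deviators [set a; b] P| * k < n)%N ->
    W \in JR k P /\ W \notin CORE k P := JR_notin_CORE_pair k_ge3 ab aW bW Wk.
split; apply: le_trans decay (le_trans few (le_prob p01 _)) => P /sep [WJ WC].
- by rewrite (subset_q_set0 WJ WC) cards0.
- by rewrite (eq_q_set0 WJ WC) cards0.
Qed.
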